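(* Let $\mathbf L=(L,\vee,\wedge,0,1)$ be a complemented modular lattice with $0\ne1$ and let $\Phi$ be a congruence of the semilattice $(L,\wedge)$. Then: (i) $[1]\Phi$ is a deductive system of $\mathbf L$; (ii) $\Theta([1]\Phi)\subseteq\Phi$.
   Context: For $a\in L$, $a^+:=\{x\in L\mid a\vee x=1,\ a\wedge x=0\}$ (the set of all complements of $a$), and $a\to b:=\{x\vee(a\wedge b)\mid x\in a^+\}$. A deductive system of $\mathbf L$ is a subset $D\subseteq L$ such that $1\in D$, and whenever $a\in D$, $b\in L$ and $a\to b\subseteq D$, then $b\in D$. For a deductive system $D$, $\Theta(D):=\{(x,y)\in L^2\mid x\to y\subseteq D\text{ and }y\to x\subseteq D\}$. $[1]\Phi$ denotes the $\Phi$-class of $1$. *)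

From HB Require Import structures.
From mathcomp Require Import all_boot all_order.
Set Implicit Arguments. Unset Strict Implicit. Unset Printing Implicit Defensive.
Import Order.TTheory.
Local Open Scope order_scope.

(* Bounded lattice L = (L, `|`, `&`, \bot, \top); \bot plays 0, \top plays 1. *)
Section Defs.
Context {disp : Order.disp_t} {L : tbLatticeType disp}.

Definition modular_lattice : Prop :=
  forall x y z : L, x <= z -> x `|` (y `&` z) = (x `|` y) `&` z.

Definition compls (a : L) : L -> Prop :=
  fun x => a `|` x = \top /\ a `&` x = \bot.

Definition complemented_lattice : Prop :=
  forall a : L, exists x, compls a x.

Definition imp (a b : L) : L -> Prop :=
  fun y => exists2 x, compls a x & y = x `|` (a `&` b).

Definition subset (A B : L -> Prop) : Prop := forall x, A x -> B x.

Definition deductive_system (D : L -> Prop) : Prop :=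
  D \top /\ (forall a b : L, D a -> subset (imp a b) D -> D b).

Definition Theta (D : L -> Prop) : L -> L -> Prop :=
  fun x y => subset (imp x y) D /\ subset (imp y x) D.

Definition meet_congruence (Phi : L -> L -> Prop) : Prop :=
  [/\ (forall x, Phi x x),
      (forall x y, Phi x y -> Phi y x),
      (forall x y z, Phi x y -> Phi y z -> Phi x z) &
      (forall x y z w, Phi x y -> Phi z w -> Phi (x `&` z) (y `&` w))].

Definition class_top (Phi : L -> L -> Prop) : L -> Prop := fun x => Phi \top x.

End Defs.

From Pilot Require Import Defs.
From HB Require Import structures.
From mathcomp Require Import all_boot all_order.
Import Order.TTheory.
Local Open Scope order_scope.

(* By modularity every element [c `|` (a `&` b)] of [a -> b] meets [a] in
   exactly [a `&` b].  So if [a -> b] lies in the class of [1], meeting with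
   [a] gives [a Phi (a `&` b)].  Hence [a Phi 1] forces [a `&` b Phi 1], and
   [b Phi 1] since the class of [1] is upward closed; and if both [x -> y] and
   [y -> x] lie in it, then [x Phi (x `&` y) Phi y]. *)

Section MeetCongruence.
Context {disp : Order.disp_t} {L : tbLatticeType disp}.

Hypotheses (modL : modular_lattice (L := L))
  (complL : complemented_lattice (L := L)).

Lemma meet_imp {a b y : L} : imp a b y -> a `&` y = a `&` b.
Proof.
move=> [c [_ ac0] ->].
by rewrite joinC meetC -modL ?leIl // [c `&` a]meetC ac0 joinx0.
Qed.

Context {Phi : L -> L -> Prop} (PhiC : meet_congruence Phi).

Lemma class_top_up {x y : L} : x <= y -> class_top Phi x -> class_top Phi y.
Proof.
case: PhiC => refl sym trans congrI xy top_x.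
have y_x : Phi y x by have := congrI _ _ _ _ top_x (refl y); rewrite meet1x meet_l.
exact: trans top_x (sym _ _ y_x).
Qed.

Lemma imp_class_top {a b : L} :
  Defs.subset (imp a b) (class_top Phi) -> Phi a (a `&` b).
Proof.
case: PhiC => refl _ _ congrI impD.
have [c ac] := complL a.
have impc : imp a b (c `|` (a `&` b)) by exists c.
have := congrI _ _ _ _ (refl a) (impD _ impc).
by rewrite meetx1 (meet_imp impc).
Qed.

End MeetCongruence.

Theorem proposition8 (disp : Order.disp_t) (L : tbLatticeType disp)
  (Phi : L -> L -> Prop) :
  modular_lattice (L := L) -> complemented_lattice (L := L) ->
  (\bot : L) != \top ->
  meet_congruence Phi ->
  deductive_system (class_top Phi) /\
  (forall x y : L, Theta (class_top Phi) x y -> Phi x y).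
Proof.
move=> modL complL _ PhiC.
have [refl sym trans _] := PhiC.
have impC := imp_class_top modL complL PhiC.
split.
  split=> [|a b top_a impD]; first exact: refl.
  apply: (class_top_up PhiC (leIr b a)).
  exact: trans top_a (impC _ _ impD).
move=> x y [impxy impyx].
have y_yx := impC _ _ impyx; rewrite meetC in y_yx.
exact: trans (impC _ _ impxy) (sym _ _ y_yx).
Qed.
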